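(* Let $(\mathcal{X},d_\mathcal{X})$ and $(\mathcal{Y},d_\mathcal{Y})$ be complete separable metric spaces and let $(\mathcal{H},\|\cdot\|_\mathcal{H})$ be a separable real Hilbert space with metric $d_\mathcal{H}(u,v):=\|u-v\|_\mathcal{H}$; equip these spaces with their Borel $\sigma$-algebras $\mathcal{B}_\mathcal{X}$, $\mathcal{B}_\mathcal{Y}$, $\mathcal{B}_\mathcal{H}$. Let $P$ be a probability measure on $(\mathcal{X}\times\mathcal{Y},\mathcal{B}_{\mathcal{X}\times\mathcal{Y}})$. Let $\psi:[0,\infty)\to[0,1]$ be a continuous, subadditive and monotone increasing function with $\psi(0)=0$ and $\psi(x)>0$ for all $x>0$, and for measurable $f_1,f_2:\mathcal{X}\to\mathcal{H}$ define $$d_\psi(f_1,f_2):=\int_{\mathcal{X}\times\mathcal{Y}} \psi\bigl(d_\mathcal{H}(f_1(x),f_2(x))\bigr)\,dP(x,y).$$ Let $C(\mathcal{X},\mathcal{H})$ be the set of all continuous functions $(\mathcal{X},d_\mathcal{X})\to(\mathcal{H},d_\mathcal{H})$, and let $\mathcal{L}_0(\mathcal{X},\mathcal{H})$ be the set of all $(\mathcal{B}_\mathcal{X},\mathcal{B}_\mathcal{H})$-measurable functions $\mathcal{X}\to\mathcal{H}$. Let $\mathcal{F}\subset\mathcal{L}_0(\mathcal{X},\mathcal{H})$ be such that either $\mathcal{F}$ is a dense subset of $C(\mathcal{X},\mathcal{H})$, or $\mathcal{F}$ contains a dense subset of $C(\mathcal{X},\mathcal{H})$, where denseness is with respect to $d_\psi$.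 Then $\mathcal{F}$ is dense in $\mathcal{L}_0(\mathcal{X},\mathcal{H})$ with respect to $d_\psi$: for every $\varepsilon>0$ and every $f\in\mathcal{L}_0(\mathcal{X},\mathcal{H})$ there exists $g_{\varepsilon,f}\in\mathcal{F}$ with $d_\psi(f,g_{\varepsilon,f})<\varepsilon$.
   Context: A subset $S$ is ''dense in $T$ with respect to $d_\psi$'' means: for every $t\in T$ and every $\varepsilon>0$ there is $s\in S$ with $d_\psi(t,s)<\varepsilon$. *)

From HB Require Import structures.
From mathcomp Require Import all_boot all_order all_algebra.
From mathcomp Require Import all_classical all_reals all_analysis.
Set Implicit Arguments. Unset Strict Implicit. Unset Printing Implicit Defensive.
Import Order.TTheory GRing.Theory Num.Theory.
Import numFieldNormedType.Exports.
Local Open Scope classical_set_scope.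
Local Open Scope ring_scope.

(* Metric spaces with a distinguished point (needed so that the Borel
   sigma-algebra of X * Y can be packaged as a measurableType; harmless since
   a probability measure on X * Y forces X and Y to be nonempty). *)
#[short(type="pointedMetricType")]
HB.structure Definition PointedMetric (K : numDomainType) :=
  { M of Pointed M & Metric K M }.

Definition borel (T : ptopologicalType) := g_sigma_algebraType (@open T).

Definition borel_prod {R : realType} (X Y : pointedMetricType R) :=
  g_sigma_algebraType (@open (X * Y)%type).

Definition complete_metric {R : realType} (X : metricType R) : Prop :=
  forall u : nat -> X,
    (forall e : R, 0 < e -> exists N : nat, forall m n : nat,
        (N <= m)%N -> (N <= n)%N -> mdist (u m) (u n) < e) ->
    exists l : X, u @ \oo --> l.

Definition separable_space (T : topologicalType) : Prop :=
  exists D : set T, countable D /\ dense D.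

Definition inner_product_norm {R : realType} (H : normedModType R) : Prop :=
  exists ip : H -> H -> R,
    [/\ forall u v, ip u v = ip v u,
        forall a u v w, ip (a *: u + v) w = a * ip u w + ip v w,
        forall u, 0 <= ip u u,
        forall u, ip u u = 0 -> u = 0
      & forall u, `|u| = Num.sqrt (ip u u)].

Definition hilbert_separable {R : realType} (H : completeNormedModType R) : Prop :=
  inner_product_norm H /\ separable_space H.

Definition L0 {R : realType} (X : pointedMetricType R) (H : normedModType R)
  : set (X -> H) :=
  [set f | @measurable_fun _ _ (borel X) (borel H) setT f].

Definition Cont {R : realType} (X : pointedMetricType R) (H : normedModType R)
  : set (X -> H) := [set f | continuous f].

Definition d_psi {R : realType} (X Y : pointedMetricType R)
  (H : normedModType R) (P : probability (borel_prod X Y) R)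
  (psi : R -> R) (f1 f2 : X -> H) : \bar R :=
  (\int[P]_(z in setT) (psi `|f1 z.1 - f2 z.1|)%:E)%E.

Definition dense_wrt {R : realType} (X Y : pointedMetricType R)
  (H : normedModType R) (P : probability (borel_prod X Y) R)
  (psi : R -> R) (S T : set (X -> H)) : Prop :=
  forall t, T t -> forall eps : R, 0 < eps ->
    exists2 s, S s & (d_psi P psi t s < eps%:E)%E.

Arguments L0 {R} X H.
Arguments Cont {R} X H.

From HB Require Import structures.
From mathcomp Require Import all_boot all_order all_algebra.
From mathcomp Require Import all_classical all_reals all_analysis.
From mathcomp Require Import measurable_realfun lra.
Set Implicit Arguments. Unset Strict Implicit. Unset Printing Implicit Defensive.
Import Order.TTheory GRing.Theory Num.Theory.
Import numFieldNormedType.Exports.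
Local Open Scope classical_set_scope.
Local Open Scope ring_scope.

(* Call f cont_approximable when it lies in the d_psi-closure of C(X, H).
   Because psi is bounded, monotone, subadditive and continuous at 0 with
   psi 0 = 0, d_psi satisfies the triangle inequality and, by dominated
   convergence, pointwise convergence of measurable maps implies convergence
   for d_psi; hence measurable cont_approximable maps are closed under sums and
   pointwise limits.  For an open set U, v 1_U is the pointwise limit of the
   continuous maps min(1, n d(x, X \ U)) v, and the pi-lambda theorem extends
   this to every Borel set.  Given a dense sequence (e_k) of H, a measurable f
   is the pointwise limit of the maps sending x to the first e_k within
   1/(n+1) of f x, which are countably valued, hence pointwise limits of finite
   sums of such indicators.  Finally, a subset that is d_psi-dense in C(X, H)
   is d_psi-dense in L0 by the triangle inequality. *)

Lemma exists_natSinv_lt (R : realType) (r : R) :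
  0 < r -> exists n : nat, n.+1%:R^-1 < r.
Proof.
move=> r0; have [N _ hN] := near_infty_natSinv_lt (PosNum r0).
by exists N; apply: hN => /=.
Qed.

Lemma separable_dense_seq (R : realType) (H : normedModType R) :
  separable_space H ->
  exists e : nat -> H, forall u (r : R), 0 < r -> exists k, `|u - e k| < r.
Proof.
move=> [D [cD dD]]; have [g gD] := pcard_surjP cD.
exists g => u r r0.
have [d [bd Dd]] := dD (ball u r) (ex_intro _ u (ballxx u r0)) (ball_open u r).
have [k _ gkd] := gD d Dd.
by exists k; rewrite gkd; move: bd; rewrite -ball_normE.
Qed.

Lemma continuous_borel_measurable (T1 T2 : ptopologicalType) (h : T1 -> T2) :
  continuous h -> @measurable_fun _ _ (borel T1) (borel T2) setT h.
Proof.
move=> ch; apply: (@measurability _ _ (borel T1) (borel T2) setT _ (@open T2)) => //.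
move=> _ [V oV <-]; rewrite setTI; apply: sub_sigma_algebra.
by move/continuousP : ch; apply.
Qed.

Lemma borel_measurable_real (R : realType) d (T : measurableType d) (h : T -> R) :
  @measurable_fun _ _ T (borel R) setT h -> measurable_fun setT h.
Proof.
move=> mh; apply: (@measurability _ _ T R setT h _ (RGenOInfty.measurableE R)).
move=> _ [_ [x ->] <-]; apply: (mh measurableT); apply: sub_sigma_algebra.
exact: rray_open.
Qed.

Section separable_pairing.
Variables (R : realType) (H : normedModType R) (e : nat -> H).
Hypothesis e_dense : forall u (r : R), 0 < r -> exists k, `|u - e k| < r.

Let box k1 k2 n : set (H * H) :=
  ball (e k1) n.+1%:R^-1 `*` ball (e k2) n.+1%:R^-1.

Lemma open_bigcup_dense_boxes (W : set (H * H)) : open W ->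
  W = \bigcup_k1 \bigcup_k2 \bigcup_(n in [set n | box k1 k2 n `<=` W]) box k1 k2 n.
Proof.
move=> oW; apply/seteqP; split=> [[u v] Wuv|]; last first.
  by move=> p [k1 _ [k2 _ [n /= sW]]]; apply: sW.
have /nbhs_ballP[r r0 rW] : nbhs (u, v) W by exact: open_nbhs_nbhs.
have [n nr] := exists_natSinv_lt (divr_gt0 r0 (ltr0n R 2)).
have q0 : 0 < n.+1%:R^-1 :> R by rewrite invr_gt0 ltr0n.
have [k1 uk1] := e_dense u q0; have [k2 vk2] := e_dense v q0.
have near_center c a : `|a - c| < n.+1%:R^-1 -> ball c n.+1%:R^-1 `<=` ball a r.
  move=> ac b; rewrite -!ball_normE /= => cb.
  apply: le_lt_trans (ler_distD c a b) _.
  by rewrite (splitr r) ltrD // (lt_trans _ nr).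
exists k1 => //; exists k2 => //; exists n; last first.
  by split; rewrite /= -ball_normE /= distrC.
by move=> [a b] [/= ak1 bk2]; apply: rW; split;
  [exact: near_center uk1 _ ak1 | exact: near_center vk2 _ bk2].
Qed.

End separable_pairing.

(* Separability makes the Borel sets of H * H generated by products of balls,
   so pairing two Borel maps stays Borel. *)
Lemma measurable_fun_continuous_pair (R : realType) (H : normedModType R)
    (T : ptopologicalType) d (D : measurableType d)
    (phi : H * H -> T) (f g : D -> H) :
  separable_space H -> continuous phi ->
  @measurable_fun _ _ D (borel H) setT f ->
  @measurable_fun _ _ D (borel H) setT g ->
  @measurable_fun _ _ D (borel T) setT (fun x => phi (f x, g x)).
Proof.
move=> /separable_dense_seq[e e_dense] cphi mf mg.
apply: (@measurability _ _ D (borel T) setT _ (@open T)) => //.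
move=> _ [V oV <-]; rewrite setTI.
have oW : open (phi @^-1` V) by move/continuousP : cphi; apply.
rewrite -[X in measurable X]/((fun x => (f x, g x)) @^-1` (phi @^-1` V)).
rewrite (@open_bigcup_dense_boxes _ _ _ e_dense _ oW) !preimage_bigcup.
apply: bigcupT_measurable => k1; apply: bigcupT_measurable => k2.
apply: bigcup_measurable => n _.
rewrite -[X in measurable X]/(f @^-1` ball (e k1) n.+1%:R^-1 `&`
                              g @^-1` ball (e k2) n.+1%:R^-1).
apply: measurableI; rewrite -[X in measurable X]setTI.
- by apply: (mf measurableT); apply: sub_sigma_algebra; exact: ball_open.
- by apply: (mg measurableT); apply: sub_sigma_algebra; exact: ball_open.
Qed.

Section L0_closure.
Variables (R : realType) (X : pointedMetricType R) (H : normedModType R).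
Hypothesis sepH : separable_space H.

Lemma continuous_L0 (f : X -> H) : Cont X H f -> L0 X H f.
Proof. exact: continuous_borel_measurable. Qed.

Lemma L0D (f g : X -> H) : L0 X H f -> L0 X H g -> L0 X H (f \+ g).
Proof.
exact: (@measurable_fun_continuous_pair R H H _ (borel X)
  (fun p => p.1 + p.2) f g sepH add_continuous).
Qed.

Lemma L0_sum (h : nat -> X -> H) n : (forall k, L0 X H (h k)) ->
  L0 X H (fun x => \sum_(k < n) h k x).
Proof.
move=> mh; elim: n => [|n IHn].
  by under eq_fun do rewrite big_ord0; apply: continuous_L0 => x; exact: cvg_cst.
by under eq_fun do rewrite big_ord_recr /=; exact: L0D.
Qed.

Lemma measurable_normB (f g : X -> H) : L0 X H f -> L0 X H g ->
  @measurable_fun _ _ (borel X) R setT (fun x => `|f x - g x|).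
Proof.
move=> mf mg; apply: borel_measurable_real.
apply: (@measurable_fun_continuous_pair R H R _ (borel X)
  (fun p => `|p.1 - p.2|) f g sepH) => // p.
apply: (@continuous_comp _ _ _ (fun p : H * H => p.1 - p.2) (@Num.Def.normr _ H)).
  by apply: continuousB; [exact: cvg_fst | exact: cvg_snd].
exact: norm_continuous.
Qed.

Lemma measurable_L0_normB_lt (f : X -> H) (u : H) (r : R) : L0 X H f ->
  @measurable _ (borel X) [set x | `|f x - u| < r].
Proof.
move=> mf; rewrite -[X in measurable X]setTI.
rewrite (_ : [set x | _] = f @^-1` ball u r).
  by apply: (mf measurableT); apply: sub_sigma_algebra; exact: ball_open.
by apply/seteqP; split => x; rewrite /= -ball_normE /= distrC.
Qed.

Lemma L0_indicZ (A : set X) (v : H) : @measurable _ (borel X) A ->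
  L0 X H (fun x => \1_A x *: v).
Proof.
move=> mA _ B _; rewrite setTI.
rewrite -[X in measurable X]/(\1_A @^-1` [set r : R | B (r *: v)]).
rewrite preimage_indic; repeat case: ifP => _.
- exact: measurableT.
- exact: mA.
- exact: measurableC.
- exact: measurable0.
Qed.

End L0_closure.

Section distance_to_complement.
Variables (R : realType) (X : metricType R) (U : set X).
Hypothesis U_neqT : exists y, ~ U y.

Definition dist_compl (x : X) : R := inf [set mdist x y | y in ~` U].

Let dist_compl_set_neq0 x : [set mdist x y | y in ~` U] !=set0.
Proof. by have [y Uy] := U_neqT; exists (mdist x y), y. Qed.

Lemma dist_compl_le x y : ~ U y -> dist_compl x <= mdist x y.
Proof.
move=> Uy; apply: ge_inf; last by exists y.
by exists 0 => _ [z _ <-]; exact: mdist_ge0.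
Qed.

Lemma dist_compl_le_mdistD x x' : dist_compl x <= mdist x x' + dist_compl x'.
Proof.
rewrite -lerBlDl; apply: lb_le_inf => // _ [y Uy <-].
rewrite lerBlDl; apply: le_trans (dist_compl_le x Uy) _.
exact: metric_triangle.
Qed.

Lemma continuous_dist_compl : continuous dist_compl.
Proof.
move=> x; apply/cvgrPdist_lt => e e0; apply/nbhs_ballP; exists e => // x'.
rewrite ballEmdist /= => xx'; apply: le_lt_trans xx'.
have := dist_compl_le_mdistD x x'; have := dist_compl_le_mdistD x' x.
by rewrite metric_sym ler_norml; lra.
Qed.

Lemma dist_compl_gt0 x : open U -> U x -> 0 < dist_compl x.
Proof.
move=> oU Ux; have /nbhs_ballP[r /= r0 rU] : nbhs x U by exact: open_nbhs_nbhs.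
apply: lt_le_trans r0 _; apply: lb_le_inf => // _ [y Uy <-].
by rewrite leNgt; apply/negP => xy; apply: Uy; apply: rU; rewrite ballEmdist.
Qed.

Lemma dist_compl_eq0 x : ~ U x -> dist_compl x = 0.
Proof.
move=> Ux; apply/eqP; rewrite eq_le; apply/andP; split.
  by rewrite -(mdistxx x); exact: dist_compl_le.
by apply: lb_le_inf => // _ [y _ <-]; exact: mdist_ge0.
Qed.

Lemma cvg_min1_dist_compl x : open U ->
  Num.min 1 (n%:R * dist_compl x) @[n --> \oo] --> (\1_U x : R).
Proof.
move=> oU; have [Ux|Ux] := pselect (U x); last first.
  rewrite indicE memNset // dist_compl_eq0 //; apply: cvg_near_cst.
  by apply: nearW => n; rewrite mulr0; apply/min_idPr; exact: ler01.
rewrite indicE mem_set //; apply: cvg_near_cst.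
have [N Nd] := exists_natSinv_lt (dist_compl_gt0 oU Ux).
exists N.+1 => // n /= Nn; apply/min_idPl.
rewrite -[leLHS](mulfV (lt0r_neq0 (ltr0Sn R N))).
by apply: ler_pM => //; [rewrite ler_nat | exact: ltW].
Qed.

End distance_to_complement.

Lemma sum_indicZ_trivIset (R : pzRingType) T (V : lmodType R)
    (A : nat -> set T) (v : nat -> V) k x n :
  trivIset setT A -> A k x -> (k < n)%N ->
  \sum_(j < n) \1_(A j) x *: v j = v k.
Proof.
move=> tA Akx kn; rewrite (bigD1 (Ordinal kn)) //= indicE mem_set // scale1r.
rewrite big1 ?addr0 // => j jk; rewrite indicE memNset ?scale0r // => Ajx.
by move: jk; rewrite -val_eqE /= (tA j k I I (ex_intro _ x (conj Ajx Akx))) eqxx.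
Qed.

Lemma cvg_sum_indicZ_trivIset (R : numFieldType) T (V : normedModType R)
    (A : nat -> set T) (v : nat -> V) k x :
  trivIset setT A -> A k x -> \sum_(j < n) \1_(A j) x *: v j @[n --> \oo] --> v k.
Proof.
move=> tA Akx; apply: cvg_near_cst; exists k.+1 => // n /= kn.
exact: sum_indicZ_trivIset.
Qed.

Section first_index.
Variables (T : Type) (p : T -> pred nat).
Hypothesis p_ex : forall x, exists k, p x k.

Definition first_index x := ex_minn (p_ex x).

Lemma first_indexP x : p x (first_index x).
Proof. by rewrite /first_index; case: ex_minnP. Qed.

Lemma first_index_eq x k :
  (first_index x = k) <-> p x k /\ (forall j, (j < k)%N -> ~~ p x j).
Proof.
rewrite /first_index; case: ex_minnP => m pm m_min; split.
  by move=> <-; split => // j jm; apply: contraTN jm => /m_min; rewrite -leqNgt.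
move=> [pk k_min]; apply/eqP; rewrite eqn_leq m_min //=.
by rewrite leqNgt; apply: contraTN pm => /k_min.
Qed.

End first_index.

Lemma measurable_first_index_eq d (T : measurableType d) (p : T -> pred nat)
    (p_ex : forall x, exists k, p x k) k :
  (forall j, measurable [set x | p x j]) ->
  measurable [set x | first_index p_ex x = k].
Proof.
move=> mp; rewrite (_ : [set x | _] = [set x | p x k] `\`
    \bigcup_(j in [set j | (j < k)%N]) [set x | p x j]).
  by apply: measurableD => //; exact: bigcup_measurable.
apply/seteqP; split => x /=.
  move=> /first_index_eq[pk k_min]; split => // -[j /= jk pj].
  by move: (k_min j jk); rewrite pj.
move=> [pk not_before]; apply/first_index_eq; split => // j jk.
by apply/negP => pj; apply: not_before; exists j.
Qed.

Lemma measurable_fst_borel_prod (R : realType) (X Y : pointedMetricType R) :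
  @measurable_fun _ _ (borel_prod X Y) (borel X) setT fst.
Proof.
apply: (@measurability _ _ (borel_prod X Y) (borel X) setT fst (@open X)) => //.
move=> _ [V oV <-]; rewrite setTI; apply: sub_sigma_algebra.
have cfst : continuous (fst : X * Y -> X) by move=> p; exact: cvg_fst.
by move/continuousP : cfst; apply.
Qed.

Section d_psi_approximation.
Variables (R : realType) (X Y : pointedMetricType R) (H : normedModType R).
Variables (P : probability (borel_prod X Y) R) (psi : R -> R).
Hypothesis sepH : separable_space H.
Hypothesis psi_cont : {within `[0, +oo[, continuous psi}.
Hypothesis psi01 : forall x, 0 <= x -> 0 <= psi x <= 1.
Hypothesis psi_subadd : forall x y, 0 <= x -> 0 <= y -> psi (x + y) <= psi x + psi y.
Hypothesis psi_nondecr : forall x y, 0 <= x -> x <= y -> psi x <= psi y.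
Hypothesis psi0 : psi 0 = 0.

Local Notation dpsi := (@d_psi R X Y H P psi).

Lemma psi_lt_near0 e : 0 < e ->
  exists2 r, 0 < r & forall x, 0 <= x -> x < r -> psi x < e.
Proof.
move=> e0; have zero_itv : (0 : R) \in `[0, +oo[ by rewrite in_itv /= lexx.
have := (subspace_continuousP _ _).1 psi_cont 0 zero_itv.
move=> /cvgrPdist_lt /(_ e e0) /nbhs_ballP[r r0 psi_r]; exists r => // x x0 xr.
have := psi_r x; rewrite -ball_normE /= sub0r normrN ger0_norm // in_itv /= x0.
rewrite /from_subspace psi0 sub0r normrN => /(_ xr isT).
exact: le_lt_trans (ler_norm _).
Qed.

Let psi_norm_ge0 (u : H) : 0 <= psi `|u|.
Proof. by case/andP: (psi01 (normr_ge0 u)). Qed.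

Let psi_norm_le1 (u : H) : psi `|u| <= 1.
Proof. by case/andP: (psi01 (normr_ge0 u)). Qed.

Lemma measurable_d_psi_integrand (f g : X -> H) : L0 X H f -> L0 X H g ->
  measurable_fun setT (fun z : borel_prod X Y => (psi `|f z.1 - g z.1|)%:E).
Proof.
move=> mf mg; apply/measurable_EFinP.
apply: (@measurable_comp _ _ _ (borel_prod X Y) R R `[0, +oo[%classic psi setT
  (fun z => `|f z.1 - g z.1|) (measurable_itv _)) => //.
- by move=> _ [z _ <-] /=; rewrite in_itv /= andbT.
- exact: subspace_continuous_measurable_fun (measurable_itv _) psi_cont.
- exact: (measurableT_comp (@measurable_normB _ _ _ sepH _ _ mf mg)
    (@measurable_fst_borel_prod _ X Y)).
Qed.

Lemma le_d_psi (a b f g f' g' : X -> H) :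
  L0 X H a -> L0 X H b -> L0 X H f -> L0 X H g -> L0 X H f' -> L0 X H g' ->
  (forall x, `|a x - b x| <= `|f x - g x| + `|f' x - g' x|) ->
  (dpsi a b <= dpsi f g + dpsi f' g')%E.
Proof.
move=> ma mb mf mg mf' mg' le_ab; rewrite /d_psi -ge0_integralD //=; last 4 first.
- by move=> z _; rewrite lee_fin.
- exact: measurable_d_psi_integrand.
- by move=> z _; rewrite lee_fin.
- exact: measurable_d_psi_integrand.
apply: ge0_le_integral => //=.
- by move=> z _; rewrite lee_fin.
- exact: measurable_d_psi_integrand.
- by apply: emeasurable_funD; exact: measurable_d_psi_integrand.
move=> z _; rewrite -EFinD lee_fin.
apply: le_trans (psi_subadd (normr_ge0 _) (normr_ge0 _)).
exact: psi_nondecr (normr_ge0 _) (le_ab _).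
Qed.

Lemma le_d_psi_triangle (f g h : X -> H) :
  L0 X H f -> L0 X H g -> L0 X H h -> (dpsi f h <= dpsi f g + dpsi g h)%E.
Proof. by move=> mf mg mh; apply: le_d_psi => // x; exact: ler_distD. Qed.

Lemma d_psixx (f : X -> H) : dpsi f f = 0%E.
Proof. by apply: integral0_eq => z _; rewrite subrr normr0 psi0. Qed.

Lemma pointwise_cvg_d_psi_lt (h : nat -> X -> H) (f : X -> H) :
  (forall n, L0 X H (h n)) -> L0 X H f ->
  (forall x, h n x @[n --> \oo] --> f x) ->
  forall e, 0 < e -> exists n, (dpsi f (h n) < e%:E)%E.
Proof.
move=> mh mf hf e e0.
pose u n (z : borel_prod X Y) := (psi `|f z.1 - h n z.1|)%:E.
have u_cvg0 : {ae P, forall z, [set: borel_prod X Y] z -> u ^~ z @ \oo --> 0%E}.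
  apply: aeW => z _; apply: cvg_EFin; first exact: nearW.
  apply/(@cvgrPdist_lt _ R^o) => eps eps0.
  have [r r0 psi_r] := psi_lt_near0 eps0.
  move: (hf z.1) => /cvgrPdist_lt /(_ r r0) hr.
  apply: filterS hr => n fhn.
  by rewrite /= sub0r normrN ger0_norm // psi_r.
have u_le1 : {ae P, forall z n, [set: borel_prod X Y] z ->
    (`|u n z| <= (EFin \o cst 1%R) z)%E}.
  by apply: aeW => z n _; rewrite /= lee_fin ger0_norm.
have [_ _ +] := @dominated_convergence _ _ R P setT measurableT u (cst 0%E)
  (EFin \o cst 1%R) (fun n => measurable_d_psi_integrand mf (mh n))
  (measurable_cst _) u_cvg0
  (finite_measure_integrable_cst P 1%R measurableT) u_le1.
rewrite integral0 => /fine_cvgP[u_fin /cvgrPdist_lt /(_ e e0) u_lt].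
have [N _ /(_ N (leqnn N))[fin_N]] := filterI u_fin u_lt.
rewrite /= sub0r normrN => /(le_lt_trans (ler_norm _)).
by exists N; rewrite -[dpsi f (h N)](fineK fin_N) lte_fin.
Qed.

Definition cont_approximable (f : X -> H) :=
  forall e : R, 0 < e -> exists2 c, Cont X H c & (dpsi f c < e%:E)%E.

Lemma cont_approximable_cont (c : X -> H) : Cont X H c -> cont_approximable c.
Proof. by move=> cc e e0; exists c => //; rewrite d_psixx lte_fin. Qed.

Lemma cont_approximable_cvg (h : nat -> X -> H) (f : X -> H) :
  (forall n, L0 X H (h n)) -> (forall n, cont_approximable (h n)) -> L0 X H f ->
  (forall x, h n x @[n --> \oo] --> f x) -> cont_approximable f.
Proof.
move=> mh ah mf hf e e0; have e2 : 0 < e / 2 by rewrite divr_gt0.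
have [n fhn] := pointwise_cvg_d_psi_lt mh mf hf e2.
have [c cc hnc] := ah n _ e2; exists c => //.
apply: le_lt_trans (le_d_psi_triangle mf (mh n) (continuous_L0 cc)) _.
by rewrite (splitr e) EFinD lteD.
Qed.

Lemma cont_approximableD (f g : X -> H) : L0 X H f -> L0 X H g ->
  cont_approximable f -> cont_approximable g -> cont_approximable (f \+ g).
Proof.
move=> mf mg af ag e e0; have e2 : 0 < e / 2 by rewrite divr_gt0.
have [c cc fc] := af _ e2; have [c' cc' gc'] := ag _ e2.
exists (c \+ c'); first by move=> x; exact: continuousD (cc x) (cc' x).
have [mc mc'] := (continuous_L0 cc, continuous_L0 cc').
apply: le_lt_trans (le_d_psi (L0D sepH mf mg) (L0D sepH mc mc')
  mf mc mg mc' _) _; first by move=> x /=; rewrite opprD addrACA; exact: ler_normD.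
by rewrite (splitr e) EFinD lteD.
Qed.

Lemma cont_approximable_sum (h : nat -> X -> H) n :
  (forall k, L0 X H (h k)) -> (forall k, cont_approximable (h k)) ->
  cont_approximable (fun x => \sum_(k < n) h k x).
Proof.
move=> mh ah; elim: n => [|n IHn].
  under eq_fun do rewrite big_ord0.
  by apply: cont_approximable_cont => x; exact: cvg_cst.
under eq_fun do rewrite big_ord_recr /=.
by apply: cont_approximableD => //; exact: L0_sum.
Qed.

Lemma cont_approximable_indicZ_open (U : set X) (v : H) : open U ->
  cont_approximable (fun x => \1_U x *: v).
Proof.
move=> oU; have mU : @measurable _ (borel X) U by exact: sub_sigma_algebra.
have [U_neqT|U_T] := pselect (exists y, ~ U y); last first.
  apply: cont_approximable_cont => x.
  suff -> : (fun x => \1_U x *: v) = cst v by exact: cvg_cst.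
  apply/funext => z; rewrite indicE mem_set ?scale1r //.
  by apply: contrapT => Uz; apply: U_T; exists z.
pose h n x := Num.min 1 (n%:R * dist_compl U x) *: v.
have h_cont n : Cont X H (h n).
  move=> x; apply: (@continuousZr_tmp _ _ _ (fun x => Num.min 1 _)).
  apply: continuous_min; first exact: cvg_cst.
  by apply: continuousM; [exact: cvg_cst | exact: continuous_dist_compl].
apply: (@cont_approximable_cvg h) => [n|n||x].
- exact: continuous_L0.
- exact: cont_approximable_cont.
- exact: L0_indicZ.
- by apply: cvgZr_tmp; exact: cvg_min1_dist_compl.
Qed.

Lemma cont_approximable_indicZ (A : set X) (v : H) : @measurable _ (borel X) A ->
  cont_approximable (fun x => \1_A x *: v).
Proof.
move=> mA; move: A mA v.
apply: (@dynkin_induction _ (borel X) open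
  [set A | forall v, cont_approximable (fun x => \1_A x *: v)]) => //.
- by move=> U V; exact: openI.
- by move=> v; exact/cont_approximable_indicZ_open/openT.
- by move=> U oU v; exact: cont_approximable_indicZ_open.
- move=> S mS aS v.
  have -> : (fun x => \1_(~` S) x *: v) = cst v \+ (fun x => \1_S x *: - v).
    apply/funext => x; rewrite /= !indicE in_setC.
    by case: (x \in S); rewrite /= ?scale1r ?scale0r ?addr0 ?subrr.
  have cst_cont : Cont X H (cst v) by move=> x; exact: cvg_cst.
  apply: cont_approximableD; [exact: continuous_L0 | exact: L0_indicZ | |].
  + exact: cont_approximable_cont.
  + exact: aS.
- move=> F mF tF aF v.
  pose h k x := \1_(F k) x *: v.
  have mh k : L0 X H (h k) by exact: L0_indicZ.
  apply: (@cont_approximable_cvg (fun n x => \sum_(k < n) h k x)).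
  + by move=> n; exact: L0_sum.
  + by move=> n; apply: cont_approximable_sum => // k; exact: aF.
  + by apply: L0_indicZ; exact: bigcupT_measurable.
  move=> x; have [[k _ Fkx]|Fx] := pselect ((\bigcup_k F k) x).
    rewrite indicE mem_set; last by exists k.
    by rewrite scale1r; exact: (@cvg_sum_indicZ_trivIset _ _ _ _ (cst v) k).
  rewrite indicE memNset // scale0r; apply: cvg_near_cst; apply: nearW => n.
  rewrite big1 // => k _; rewrite /h indicE memNset ?scale0r // => Fkx.
  by apply: Fx; exists k.
Qed.

Section countably_valued.
Variables (idx : X -> nat) (e : nat -> H).
Hypothesis m_idx : forall k, @measurable _ (borel X) [set x | idx x = k].

Lemma L0_countably_valued : L0 X H (e \o idx).
Proof.
move=> _ B _; rewrite setTI.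
rewrite (_ : _ @^-1` _ = \bigcup_(k in [set k | B (e k)]) [set x | idx x = k]).
  exact: bigcup_measurable.
by apply/seteqP; split => [x Bx|x [k Bk /= ->]] //; exists (idx x).
Qed.

Lemma cont_approximable_countably_valued : cont_approximable (e \o idx).
Proof.
pose h k x := \1_[set x | idx x = k] x *: e k.
have mh k : L0 X H (h k) by exact: L0_indicZ.
apply: (@cont_approximable_cvg (fun n x => \sum_(k < n) h k x)) => [n|n||x].
- exact: L0_sum.
- by apply: cont_approximable_sum => // k; exact: cont_approximable_indicZ.
- exact: L0_countably_valued.
- apply: (@cvg_sum_indicZ_trivIset _ _ _ (fun k => [set y | idx y = k]) e) => //.
  by move=> i j _ _ [y [/= <- <-]].
Qed.

End countably_valued.

Lemma cont_approximable_L0 (f : X -> H) : L0 X H f -> cont_approximable f.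
Proof.
move=> mf; have [e e_dense] := separable_dense_seq sepH.
have near_e n x : exists k, `|f x - e k| < n.+1%:R^-1.
  by apply: e_dense; rewrite invr_gt0 ltr0n.
pose idx n := first_index (near_e n).
have m_idx n k : @measurable _ (borel X) [set x | idx n x = k].
  by apply: measurable_first_index_eq => j; exact: measurable_L0_normB_lt.
apply: (@cont_approximable_cvg (fun n => e \o idx n)) => [n|n||x] //.
- exact: L0_countably_valued.
- exact: cont_approximable_countably_valued.
apply/cvgrPdist_lt => eps eps0; have [N Neps] := exists_natSinv_lt eps0.
exists N => // n /= Nn; apply: lt_trans (first_indexP (near_e n) x) _.
by apply: le_lt_trans Neps; rewrite lef_pV2 ?posrE ?ltr0n // ler_nat ltnS.
Qed.

Lemma dense_wrt_L0 (S : set (X -> H)) : S `<=` L0 X H ->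
  dense_wrt P psi S (Cont X H) -> dense_wrt P psi S (L0 X H).
Proof.
move=> SL0 S_dense f mf e e0; have e2 : 0 < e / 2 by rewrite divr_gt0.
have [c cc fc] := cont_approximable_L0 mf e2.
have [s Ss cs] := S_dense c cc _ e2; exists s => //.
apply: le_lt_trans (le_d_psi_triangle mf (continuous_L0 cc) (SL0 _ Ss)) _.
by rewrite (splitr e) EFinD lteD.
Qed.

End d_psi_approximation.

Theorem theorem7 (R : realType) (X Y : pointedMetricType R)
  (H : completeNormedModType R)
  (P : probability (borel_prod X Y) R) (psi : R -> R)
  (F : set (X -> H)) :
  complete_metric X -> separable_space X ->
  complete_metric Y -> separable_space Y ->
  hilbert_separable H ->
  {within `[0, +oo[, continuous psi} ->
  (forall x, 0 <= x -> 0 <= psi x <= 1) ->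
  (forall x y, 0 <= x -> 0 <= y -> psi (x + y) <= psi x + psi y) ->
  (forall x y, 0 <= x -> x <= y -> psi x <= psi y) ->
  psi 0 = 0 ->
  (forall x, 0 < x -> 0 < psi x) ->
  F `<=` L0 X H ->
  ((F `<=` Cont X H /\ dense_wrt P psi F (Cont X H)) \/
   (exists2 S, S `<=` F & S `<=` Cont X H /\ dense_wrt P psi S (Cont X H))) ->
  forall eps : R, 0 < eps -> forall f, L0 X H f ->
    exists2 g, F g & (d_psi P psi f g < eps%:E)%E.
Proof.
move=> _ _ _ _ [_ sepH] psi_cont psi01 psi_subadd psi_nondecr psi0 _ FL0 F_dense.
have [S SF S_dense] : exists2 S, S `<=` F & dense_wrt P psi S (Cont X H).
  by case: F_dense => [[_ F_dense]|[S SF [_ S_dense]]]; [exists F | exists S].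
move=> eps eps0 f mf.
have [g Sg fg] := dense_wrt_L0 sepH psi_cont psi01 psi_subadd psi_nondecr psi0
  (subset_trans SF FL0) S_dense mf eps0.
by exists g; first exact: SF.
Qed.
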